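(* Let $\Gamma_3^*\subseteq\mathbb{R}^7$ be the set of entropy vectors of triples of discrete random variables. Let $\mathbf{e}_1=[1,0,0,1,1,0,1]^\intercal$, $\mathbf{e}_2=[0,1,0,1,0,1,1]^\intercal$, $\mathbf{e}_3=[0,0,1,0,1,1,1]^\intercal$, $\mathbf{e}_{12}=[1,1,0,1,1,1,1]^\intercal$, $\mathbf{e}_{123'}=[1,1,1,2,2,2,2]^\intercal$, and let $\Omega=\mathrm{cone}(\mathbf{e}_1,\mathbf{e}_2,\mathbf{e}_3,\mathbf{e}_{12},\mathbf{e}_{123'})$ be the set of all nonnegative combinations of these vectors. Let $\Omega^{\mathrm{in}}$ be the set of all vectors $\lambda_1\mathbf{e}_1+\lambda_2\mathbf{e}_2+\lambda_3\mathbf{e}_3+\lambda_{12}\mathbf{e}_{12}+\lambda_{123'}\mathbf{e}_{123'}$ with all $\lambda_j\ge 0$ such that at least one of the following holds: (i) $\lambda_{12}+\lambda_{123'}\ge\log\lceil 2^{\lambda_{123'}}\rceil$; (ii) $\lambda_{123'}=\log m$ for some $m\in\mathbb{N}$. Then there exists an entropy vector $\mathbf{h}\in\Gamma_3^*$ lying in the relative interior of $\Omega$ (i.e., in $\Omega$ but in no proper face of $\Omega$) such that $\mathbf{h}\notin\Omega^{\mathrm{in}}$.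
   Context: All logarithms are base 2 and entropies are in bits. For a discrete random vector $(X_1,X_2,X_3)$, its entropy vector is $\mathbf{h}=[h_1,h_2,h_3,h_{12},h_{13},h_{23},h_{123}]^\intercal\in\mathbb{R}^7$, where $h_\alpha$ is the Shannon entropy of $(X_i)_{i\in\alpha}$. $\Omega$ is a face of the polymatroid cone $\Gamma_3$ (the set of $\mathbf{h}$ satisfying the Shannon elemental inequalities). *)

From HB Require Import structures.
From mathcomp Require Import all_boot all_order all_algebra.
From mathcomp Require Import all_classical all_reals all_analysis.
Set Implicit Arguments. Unset Strict Implicit. Unset Printing Implicit Defensive.
Import Order.TTheory GRing.Theory Num.Theory.
Local Open Scope ring_scope.

Section Entropy.
Variable R : realType.

Definition log2 (x : R) : R := ln x / ln 2.

Definition xlog2x (x : R) : R := if x == 0 then 0 else x * log2 x.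

(* Shannon entropy (bits) of f(X) where X ~ p on a finite type T *)
Definition entropy_of (T U : finType) (p : {ffun T -> R}) (f : T -> U) : R :=
  - \sum_(u : U) xlog2x (\sum_(t : T | f t == u) p t).

Definition is_pmf (T : finType) (p : {ffun T -> R}) : Prop :=
  (forall t, 0 <= p t) /\ \sum_(t : T) p t = 1.

Definition vec7 (a b c d e f g : R) : 'rV[R]_7 :=
  \row_(i < 7) [:: a; b; c; d; e; f; g]`_i.

(* entropy vector [h1,h2,h3,h12,h13,h23,h123] of (X1,X2,X3) with joint pmf p *)
Definition entvec (T1 T2 T3 : finType) (p : {ffun (T1 * T2 * T3)%type -> R})
  : 'rV[R]_7 :=
  vec7 (entropy_of p (fun t => t.1.1))
       (entropy_of p (fun t => t.1.2))
       (entropy_of p (fun t => t.2))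
       (entropy_of p (fun t => (t.1.1, t.1.2)))
       (entropy_of p (fun t => (t.1.1, t.2)))
       (entropy_of p (fun t => (t.1.2, t.2)))
       (entropy_of p (fun t => t)).

(* Gamma_3^* : entropy vectors of triples of (finitely supported) discrete r.v.s *)
Definition entropic (h : 'rV[R]_7) : Prop :=
  exists (T1 T2 T3 : finType) (p : {ffun (T1 * T2 * T3)%type -> R}),
    is_pmf p /\ h = entvec p.

Definition e1 : 'rV[R]_7 := vec7 1 0 0 1 1 0 1.
Definition e2 : 'rV[R]_7 := vec7 0 1 0 1 0 1 1.
Definition e3 : 'rV[R]_7 := vec7 0 0 1 0 1 1 1.
Definition e12 : 'rV[R]_7 := vec7 1 1 0 1 1 1 1.
Definition e123' : 'rV[R]_7 := vec7 1 1 1 2 2 2 2.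

Definition comb (l1 l2 l3 l12 l123 : R) : 'rV[R]_7 :=
  l1 *: e1 + l2 *: e2 + l3 *: e3 + l12 *: e12 + l123 *: e123'.

Definition in_Omega (h : 'rV[R]_7) : Prop :=
  exists l1 l2 l3 l12 l123 : R,
    [/\ 0 <= l1, 0 <= l2, 0 <= l3, 0 <= l12 & 0 <= l123] /\
    h = comb l1 l2 l3 l12 l123.

Definition dot7 (a x : 'rV[R]_7) : R := \sum_(i < 7) a 0 i * x 0 i.

(* Faces of the polyhedral cone Omega are the sets
   Omega ∩ {x | a.x = 0} for a supporting functional a (a.x >= 0 on Omega).
   h is in the relative interior iff h is in Omega and every face containing h
   is all of Omega (i.e. h lies in no proper face). *)
Definition in_relint_Omega (h : 'rV[R]_7) : Prop :=
  in_Omega h /\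
  forall a : 'rV[R]_7,
    (forall x, in_Omega x -> 0 <= dot7 a x) ->
    dot7 a h = 0 ->
    forall x, in_Omega x -> dot7 a x = 0.

Definition in_Omega_in (h : 'rV[R]_7) : Prop :=
  exists l1 l2 l3 l12 l123 : R,
    [/\ 0 <= l1, 0 <= l2, 0 <= l3, 0 <= l12 & 0 <= l123] /\
    h = comb l1 l2 l3 l12 l123 /\
    (log2 (Num.ceil (2 `^ l123))%:~R <= l12 + l123
     \/ exists m : nat, l123 = log2 m%:R).

End Entropy.

From HB Require Import structures.
From mathcomp Require Import all_boot all_order all_algebra.
From mathcomp Require Import all_classical all_reals all_analysis.
From mathcomp Require Import ring lra zify.
Set Implicit Arguments. Unset Strict Implicit. Unset Printing Implicit Defensive.
Import Order.TTheory GRing.Theory Num.Theory.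
Local Open Scope ring_scope.

(* X3 is, with probability 3/4, the bitwise XOR of two-bit parts of X1 and X2;
   with probability 1/4 only the first bits are XORed and the second bit of X3
   is fresh noise, the selector being part of X1.  This time-sharing between
   the log 4 and log 2 realisations of e123' gives l123 = 7/4, strictly between
   log 3 and 2, so (ii) fails.  Bits u in X1 and v in X2 with P(u = v) = 2/3
   add l12 = I(u; v) = 5/3 - log 3: positive, so that all five coefficients are
   positive and h is in the relative interior, but too small for (i), as
   l12 + l123 < 2 = log (ceil (2 ^ (7/4))). *)

Section Log2.
Variable R : realType.
Implicit Types x y : R.

Lemma ln2_gt0 : 0 < ln (2 : R).
Proof. by rewrite ln_gt0 // ltr1n. Qed.

Lemma log2_2 : log2 (2 : R) = 1.
Proof. by rewrite /log2 divff // gt_eqF // ln2_gt0. Qed.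

Lemma ltr_log2 : {in Num.pos &, {mono @log2 R : x y / x < y}}.
Proof. by move=> x y x0 y0; rewrite /log2 ltr_pM2r ?invr_gt0 ?ln2_gt0 // ltr_ln. Qed.

Lemma ler_log2 : {in Num.pos &, {mono @log2 R : x y / x <= y}}.
Proof. by move=> x y x0 y0; rewrite /log2 ler_pM2r ?invr_gt0 ?ln2_gt0 // ler_ln. Qed.

Lemma log2M : {in Num.pos &, {morph @log2 R : x y / x * y >-> x + y}}.
Proof. by move=> x y x0 y0; rewrite /log2 lnM // mulrDl. Qed.

Lemma log2_div : {in Num.pos &, {morph @log2 R : x y / x / y >-> x - y}}.
Proof. by move=> x y x0 y0; rewrite /log2 ln_div // mulrBl. Qed.

Lemma log2Xn n x : 0 < x -> log2 (x ^+ n) = log2 x *+ n.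
Proof. by move=> x0; rewrite /log2 lnXn // mulrnAl. Qed.

Lemma log2_powR2 x : log2 (2 `^ x) = x.
Proof. by rewrite /log2 ln_powR mulfK // gt_eqF // ln2_gt0. Qed.

Lemma log2_nat23 (a b : nat) :
  log2 (2 ^ a * 3 ^ b)%N%:R = a%:R + b%:R * log2 (3 : R).
Proof.
rewrite natrM !natrX log2M ?posrE ?exprn_gt0 ?ltr0n // !log2Xn ?ltr0n //.
by rewrite log2_2 -mulr_natr mul1r mulr_natl.
Qed.

Lemma log2_4 : log2 (4 : R) = 2.
Proof. by have := log2_nat23 2 0; rewrite mul0r addr0. Qed.

Lemma log2_3_bounds : 3 / 2 < log2 (3 : R) < 5 / 3.
Proof.
have lt_log2 (m n : nat) : (0 < m < n)%N -> log2 m%:R < log2 n%:R :> R.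
  case/andP=> m0 mn.
  by rewrite ltr_log2 ?posrE ?ltr0n ?ltr_nat // (leq_trans m0 (ltnW mn)).
have := lt_log2 (2 ^ 3 * 3 ^ 0)%N (2 ^ 0 * 3 ^ 2)%N isT.
have := lt_log2 (2 ^ 0 * 3 ^ 3)%N (2 ^ 5 * 3 ^ 0)%N isT.
rewrite !log2_nat23; lra.
Qed.

Lemma log2_nat_gap (m : nat) : log2 m%:R <= log2 (3 : R) \/ 2 <= log2 (m%:R : R).
Proof.
have [m3|m4] := leqP m 3; [left|right].
  case: m m3 => [_|m m3]; last by rewrite ler_log2 ?posrE ?ltr0n ?ler_nat.
  have -> : log2 (0%:R : R) = 0 by rewrite /log2 ln0 // mul0r.
  by have := log2_3_bounds; lra.
by rewrite -[leLHS]log2_4 ler_log2 ?posrE ?ltr0n ?ler_nat // (leq_trans _ m4).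
Qed.

Lemma log2_ceil_powR2 x : log2 3 < x -> 2 <= log2 (Num.ceil (2 `^ x))%:~R :> R.
Proof.
move=> x3.
have pow_gt3 : 3 < 2 `^ x.
  by rewrite -ltr_log2 ?posrE ?powR_gt0 // log2_powR2.
have ceil_gt3 : (3 : int) < Num.ceil (2 `^ x).
  by rewrite -(ltr_int R); have := ceil_ge (2 `^ x); lra.
have : (4 : int) <= Num.ceil (2 `^ x) by lia.
rewrite -(ler_int R) => ceil_ge4.
by rewrite -[leLHS]log2_4 ler_log2 ?posrE //; lra.
Qed.

Lemma xlog2x_frac (k N : nat) :
  xlog2x (k%:R / N%:R : R) = k%:R / N%:R * (log2 k%:R - log2 N%:R).
Proof.
rewrite /xlog2x; case: k => [|k]; first by rewrite mul0r eqxx mul0r.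
case: N => [|N]; first by rewrite invr0 mulr0 eqxx mul0r.
by rewrite mulf_eq0 invr_eq0 !pnatr_eq0 /= log2_div // posrE ltr0n.
Qed.
End Log2.

(* Big operators over a finType do not reduce under [vm_compute] (the
   enumeration of a product type is locked), so concrete sums are evaluated
   along an explicit enumeration. *)
Definition enumerates (T : finType) (s : seq T) :=
  forall (V : Type) (idx : V) (op : Monoid.com_law idx) (F : T -> V),
    \big[op/idx]_(t : T) F t = \big[op/idx]_(t <- s) F t.

Definition pairs (A B : Type) (sA : seq A) (sB : seq B) : seq (A * B) :=
  [seq (a, b) | a <- sA, b <- sB].

Lemma enumerates_bool : enumerates [:: true; false].
Proof. by move=> V idx op F; rewrite big_bool !big_cons big_nil Monoid.mulm1. Qed.

Lemma enumerates_pairs (A B : finType) (sA : seq A) (sB : seq B) :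
  enumerates sA -> enumerates sB -> enumerates (pairs sA sB).
Proof.
move=> enumA enumB V idx op F.
transitivity (\big[op/idx]_(a : A) \big[op/idx]_(b : B) F (a, b)).
  by rewrite (pair_bigA op (fun a b => F (a, b))); apply: eq_bigr => -[].
by rewrite big_allpairs enumA; apply: eq_bigr => a _; rewrite enumB.
Qed.

Lemma sum_nat_enumerates (T : finType) (s : seq T) (P : pred T) (F : T -> nat) :
  enumerates s -> (\sum_(t | P t) F t)%N = sumn [seq F t | t <- s & P t].
Proof.
by move=> enum_s; rewrite big_mkcond enum_s -big_mkcond sumnE big_map big_filter.
Qed.

Section EntropyOfCounts.
Variable R : realType.

Lemma sum_tally_seq (G : nat -> R) (l : seq (nat * nat)) :
  \sum_(k <- tally_seq l) G k = \sum_(kc <- l) kc.2%:R * G kc.1.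
Proof.
rewrite big_flatten big_map; apply: eq_bigr => kc _.
by rewrite big_nseq iter_addr_0 mulr_natl.
Qed.

Lemma entropy_of_counts (T U : finType) (sT : seq T) (sU : seq U) (q : T -> nat)
    (N : nat) (f : T -> U) (l : seq (nat * nat)) :
  enumerates sT -> enumerates sU ->
  perm_eq [seq sumn [seq q t | t <- sT & f t == u] | u <- sU] (tally_seq l) ->
  entropy_of ([ffun t => (q t)%:R / N%:R] : {ffun T -> R}) f =
  - \sum_(kc <- l) kc.2%:R * xlog2x (kc.1%:R / N%:R).
Proof.
move=> enumT enumU counts; rewrite /entropy_of (enumU _ _ +%R).
have -> : \sum_(u <- sU) xlog2x (\sum_(t | f t == u) [ffun t => (q t)%:R / N%:R] t) =
          \sum_(k <- [seq sumn [seq q t | t <- sT & f t == u] | u <- sU])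
            xlog2x (k%:R / N%:R : R).
  rewrite big_map; apply: eq_bigr => u _; congr xlog2x.
  rewrite -(sum_nat_enumerates _ _ enumT) natr_sum mulr_suml.
  by apply: eq_bigr => t _; rewrite ffunE.
by rewrite (perm_big _ counts) sum_tally_seq.
Qed.

End EntropyOfCounts.

Section ConeOmega.
Variable R : realType.

Lemma comb_coords (l1 l2 l3 l12 l123 : R) :
  comb l1 l2 l3 l12 l123 =
  vec7 (l1 + l12 + l123) (l2 + l12 + l123) (l3 + l123) (l1 + l2 + l12 + 2 * l123)
       (l1 + l3 + l12 + 2 * l123) (l2 + l3 + l12 + 2 * l123)
       (l1 + l2 + l3 + l12 + 2 * l123).
Proof.
apply/rowP => i; rewrite /comb /e1 /e2 /e3 /e12 /e123' /vec7 !mxE.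
case: i => [[|[|[|[|[|[|[|i]]]]]]] lti] //=; ring.
Qed.

Lemma comb_inj (l1 l2 l3 l12 l123 m1 m2 m3 m12 m123 : R) :
  comb l1 l2 l3 l12 l123 = comb m1 m2 m3 m12 m123 ->
  [/\ l1 = m1, l2 = m2, l3 = m3, l12 = m12 & l123 = m123].
Proof.
rewrite !comb_coords => /rowP eq_lm.
have := eq_lm (@Ordinal 7 0 isT); have := eq_lm (@Ordinal 7 1 isT).
have := eq_lm (@Ordinal 7 2 isT); have := eq_lm (@Ordinal 7 3 isT).
have := eq_lm (@Ordinal 7 4 isT); have := eq_lm (@Ordinal 7 5 isT).
have := eq_lm (@Ordinal 7 6 isT).
rewrite /vec7 !mxE /= => *; split; lra.
Qed.

Lemma dot7_comb (a : 'rV[R]_7) (l1 l2 l3 l12 l123 : R) :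
  dot7 a (comb l1 l2 l3 l12 l123) =
  l1 * dot7 a (e1 R) + l2 * dot7 a (e2 R) + l3 * dot7 a (e3 R)
  + l12 * dot7 a (e12 R) + l123 * dot7 a (e123' R).
Proof.
rewrite /dot7 /comb /e1 /e2 /e3 /e12 /e123' /vec7 !big_ord_recl !big_ord0 !mxE /=.
ring.
Qed.

Lemma relint_Omega_comb (l1 l2 l3 l12 l123 : R) :
  0 < l1 -> 0 < l2 -> 0 < l3 -> 0 < l12 -> 0 < l123 ->
  in_relint_Omega (comb l1 l2 l3 l12 l123).
Proof.
move=> l1_gt0 l2_gt0 l3_gt0 l12_gt0 l123_gt0; split.
  by exists l1, l2, l3, l12, l123; split=> //; split; apply: ltW.
move=> a a_ge0 a_h x [m1 [m2 [m3 [m12 [m123 [_ ->]]]]]].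
rewrite dot7_comb in a_h; rewrite dot7_comb.
set d1 := dot7 a _ in a_h *; set d2 := dot7 a _ in a_h *; set d3 := dot7 a _ in a_h *.
set d12 := dot7 a _ in a_h *; set d123 := dot7 a _ in a_h *.
have d_comb_ge0 (k1 k2 k3 k12 k123 : R) :
    0 <= k1 -> 0 <= k2 -> 0 <= k3 -> 0 <= k12 -> 0 <= k123 ->
    0 <= k1 * d1 + k2 * d2 + k3 * d3 + k12 * d12 + k123 * d123.
  by move=> *; rewrite -dot7_comb; apply: a_ge0; exists k1, k2, k3, k12, k123.
have le00 := lexx (0 : R).
have d1_ge0 := d_comb_ge0 1 0 0 0 0 ler01 le00 le00 le00 le00.
have d2_ge0 := d_comb_ge0 0 1 0 0 0 le00 ler01 le00 le00 le00.
have d3_ge0 := d_comb_ge0 0 0 1 0 0 le00 le00 ler01 le00 le00.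
have d12_ge0 := d_comb_ge0 0 0 0 1 0 le00 le00 le00 ler01 le00.
have d123_ge0 := d_comb_ge0 0 0 0 0 1 le00 le00 le00 le00 ler01.
have [-> -> -> -> ->] : [/\ d1 = 0, d2 = 0, d3 = 0, d12 = 0 & d123 = 0].
  by split; nra.
by rewrite !mulr0 !addr0.
Qed.

Lemma comb_notin_Omega_in (l1 l2 l3 l12 l123 : R) :
  log2 3 < l123 -> l12 + l123 < 2 -> ~ in_Omega_in (comb l1 l2 l3 l12 l123).
Proof.
move=> l123_gt l_lt2 [m1 [m2 [m3 [m12 [m123 [[_ _ _ m12_ge0 _] [eq_lm cond]]]]]]].
case/comb_inj: eq_lm => _ _ _ <- <- in m12_ge0 cond *.
case: cond => [ceil_le | [m l123_eq]].
  by have := log2_ceil_powR2 l123_gt; lra.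
by have := log2_nat_gap R m; lra.
Qed.

End ConeOmega.

Local Notation bits1 := [:: true; false].
Local Notation bits2 := (pairs bits1 bits1).
Local Notation bits3 := (pairs bits2 bits1).
Local Notation bits4 := (pairs bits3 bits1).
Local Notation outcomes := (pairs (pairs bits4 bits3) bits2).
Ltac enumerates_tac := repeat (apply: enumerates_pairs || apply: enumerates_bool).

(* Probabilities times 768 of X1 = (s, a1, a2, u), X2 = (b1, b2, v),
   X3 = (c1, c2).  The arithmetic is in nat_scope on purpose: in ring_scope the
   boolean factor would make the product one in the ring bool. *)
Definition witness_count
    (t : (bool * bool * bool * bool) * (bool * bool * bool) * (bool * bool)) : nat :=
  let: ((s, a1, a2, u), (b1, b2, v), (c1, c2)) := t in
  let uv := if u == v then 2%N else 1%N in
  if s then (6 * uv * ((c1 == xorb a1 b1) && (c2 == xorb a2 b2)))%N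
  else (uv * (c1 == xorb a1 b1))%N.

Section Witness.
Variable R : realType.

Definition witness_pmf :
    {ffun (bool * bool * bool * bool) * (bool * bool * bool) * (bool * bool) -> R} :=
  [ffun t => (witness_count t)%:R / 768%:R].

Lemma is_pmf_witness : is_pmf witness_pmf.
Proof.
split=> [t|]; first by rewrite ffunE divr_ge0 ?ler0n.
under eq_bigr do rewrite ffunE.
rewrite -mulr_suml -natr_sum (@sum_nat_enumerates _ outcomes); last by enumerates_tac.
rewrite (_ : sumn _ = 768%N); last by vm_compute.
by rewrite divff; last by rewrite pnatr_eq0.
Qed.

(* [l] lists the marginal counts as (count, multiplicity) pairs; [vm_compute]
   checks it against the distribution. *)
Tactic Notation "rewrite_entropy_by_counts" constr(sU) constr(l) :=
  rewrite /witness_pmf (@entropy_of_counts _ _ _ outcomes sU _ _ _ l);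
  [rewrite !big_cons big_nil /= !xlog2x_frac
  | by enumerates_tac | by enumerates_tac | by vm_compute].

Lemma entropy_X1 : entropy_of witness_pmf (fun t => t.1.1) = 5 - 3 / 4 * log2 3.
Proof.
rewrite_entropy_by_counts bits4 [:: (24, 8); (72, 8)]%N.
by rewrite (log2_nat23 _ 3 1) (log2_nat23 _ 3 2) (log2_nat23 _ 8 1); lra.
Qed.

Lemma entropy_X2 : entropy_of witness_pmf (fun t => t.1.2) = 3.
Proof.
rewrite_entropy_by_counts bits3 [:: (96, 8)]%N.
by rewrite (log2_nat23 _ 5 1) (log2_nat23 _ 8 1); lra.
Qed.

Lemma entropy_X3 : entropy_of witness_pmf (fun t => t.2) = 2.
Proof.
rewrite_entropy_by_counts bits2 [:: (192, 4)]%N.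
by rewrite (log2_nat23 _ 6 1) (log2_nat23 _ 8 1); lra.
Qed.

Lemma entropy_X12 :
  entropy_of witness_pmf (fun t => (t.1.1, t.1.2)) = 19 / 3 + log2 3 / 4.
Proof.
rewrite_entropy_by_counts (pairs bits4 bits3) [:: (2, 32); (4, 32); (6, 32); (12, 32)]%N.
rewrite (log2_nat23 _ 1 0) (log2_nat23 _ 2 0) (log2_nat23 _ 1 1) (log2_nat23 _ 2 1).
by rewrite (log2_nat23 _ 8 1); lra.
Qed.

Lemma entropy_X13 :
  entropy_of witness_pmf (fun t => (t.1.1, t.2)) = 7 - 3 / 4 * log2 3.
Proof.
rewrite_entropy_by_counts (pairs bits4 bits2) [:: (6, 32); (18, 32)]%N.
by rewrite (log2_nat23 _ 1 1) (log2_nat23 _ 1 2) (log2_nat23 _ 8 1); lra.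
Qed.

Lemma entropy_X23 : entropy_of witness_pmf (fun t => (t.1.2, t.2)) = 5.
Proof.
rewrite_entropy_by_counts (pairs bits3 bits2) [:: (24, 32)]%N.
by rewrite (log2_nat23 _ 3 1) (log2_nat23 _ 8 1); lra.
Qed.

Lemma entropy_X123 : entropy_of witness_pmf (fun t => t) = 79 / 12 + log2 3 / 4.
Proof.
rewrite_entropy_by_counts outcomes [:: (0, 320); (1, 64); (2, 64); (6, 32); (12, 32)]%N.
rewrite (log2_nat23 _ 0 0) (log2_nat23 _ 1 0) (log2_nat23 _ 1 1) (log2_nat23 _ 2 1).
by rewrite (log2_nat23 _ 8 1); lra.
Qed.

Lemma entvec_witness :
  entvec witness_pmf =
  comb (19 / 12 + log2 3 / 4) (log2 3 - 5 / 12) (1 / 4) (5 / 3 - log2 3) (7 / 4).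
Proof.
rewrite /entvec entropy_X1 entropy_X2 entropy_X3 entropy_X12 entropy_X13.
by rewrite entropy_X23 entropy_X123 comb_coords; congr vec7; lra.
Qed.

End Witness.

Theorem theorem5 (R : realType) :
  exists h : 'rV[R]_7,
    entropic h /\ in_relint_Omega h /\ ~ in_Omega_in h.
Proof.
have [log2_3_gt log2_3_lt] := andP (log2_3_bounds R).
exists (comb (19 / 12 + log2 3 / 4) (log2 3 - 5 / 12) (1 / 4) (5 / 3 - log2 3) (7 / 4)).
split; [|split].
- exists _, _, _, (witness_pmf R).
  by split; [exact: is_pmf_witness | rewrite entvec_witness].
- by apply: relint_Omega_comb; lra.
- by apply: comb_notin_Omega_in; lra.
Qed.
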